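(* Let $k,n$ be positive integers with $k\leqslant n$ and let $C\in\mathrm{Conf}([n]^k_<)$ be a shelling order. Then its evacuation $\epsilon_D C$ is a shelling order.
   Context: $[n]:=\{1,\ldots,n\}$; $[n]^k_<$ denotes the set of $k$-element subsets of $[n]$. $\mathrm{Conf}([n]^k_<)$ is the set of tuples $C=(C_1,\ldots,C_h)$, $h\geqslant1$, of pairwise distinct elements of $[n]^k_<$. $C$ is a shelling order if for all $i<j$ in $[h]$ there exists $z<j$ with $|C_z\cap C_j|=k-1$ and $C_i\cap C_j\subseteq C_z\cap C_j$. The dual graph $D(C)$ is the graph on $[h]$ with $\{i,j\}$ an edge iff $|C_i\cap C_j|=k-1$. For a graph $G$ on $[h]$, its track $T_G=\{v_1,\ldots,v_r\}$ is defined by $v_1=1$ and, for $i\geqslant2$, $v_i=\min\{j\in[h]: j>v_{i-1},\ \{v_{i-1},j\}\text{ an edge}\}$ if this exists, otherwise $r=i-1$. The promotion $\partial_G\in S_h$ is given by $\partial_G(i)=i-1$ for $i\notin T_G$, $\partial_G(v_j)=v_{j+1}-1$ for $j\in[r-1]$, $\partial_G(v_r)=h$. For $\sigma\in S_h$, $\sigma C:=(C_{\sigma^{-1}(1)},\ldots,C_{\sigma^{-1}(h)})$, and $\partial_D C:=\partial_{D(C)}C$. For $r\in[h]$, the $r$-promotion is $\partial_{r,D}C:=(\partial_D(C_1,\ldots,C_r),C_{r+1},\ldots,C_h)$, i.e. promotion applied to the prefix of length $r$ followed by the unchanged remaining entries. The evacuation is $\epsilon_D C:=(\partial_{2,D}\circ\cdots\circ\partial_{h-1,D}\circ\partial_{h,D})(C)$.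 *)

From mathcomp Require Import all_boot.
Set Implicit Arguments. Unset Strict Implicit. Unset Printing Implicit Defensive.

(* Ground set [n] = {1,..,n} is relabelled as 'I_n = {0,..,n-1}.
   A configuration C = (C_1,...,C_h) is a seq of subsets; positions are
   1-based as in the paper: C_i := nth set0 C (i-1). *)

Section Defs.
Variable n : nat.
Implicit Types C : seq {set 'I_n}.

Definition Cn C (i : nat) : {set 'I_n} := nth set0 C i.-1.

Definition is_conf (k : nat) C : bool :=
  [&& 0 < size C, uniq C & all (fun A : {set 'I_n} => #|A| == k) C].

Definition shelling (k : nat) C : Prop :=
  forall i j, 1 <= i -> i < j -> j <= size C ->
    exists z, [/\ 1 <= z, z < j, #|Cn C z :&: Cn C j| = k - 1
              & Cn C i :&: Cn C j \subset Cn C z :&: Cn C j].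

Definition dual (k : nat) C : rel nat :=
  fun i j => #|Cn C i :&: Cn C j| == k - 1.
End Defs.

Definition tnext (G : rel nat) (h v : nat) : option nat :=
  ohead [seq j <- iota v.+1 (h - v) | G v j].

Fixpoint trk (G : rel nat) (h fuel v : nat) : seq nat :=
  v :: match fuel with
       | 0 => [::]
       | f.+1 => if tnext G h v is Some w then trk G h f w else [::]
       end.

Definition track (G : rel nat) (h : nat) : seq nat := trk G h h 1.

Definition promo (G : rel nat) (h : nat) (i : nat) : nat :=
  if i \in track G h then
    (if tnext G h i is Some w then w.-1 else h)
  else i.-1.

(* sigma C = (C_{sigma^-1(1)},...,C_{sigma^-1(h)}) *)
Definition act (n : nat) (sigma : nat -> nat) (C : seq {set 'I_n}) :=
  [seq nth set0 C (index m [seq sigma i | i <- iota 1 (size C)])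
  | m <- iota 1 (size C)].

Definition promoD (n k : nat) (C : seq {set 'I_n}) :=
  act (promo (dual k C) (size C)) C.

Definition rpromo (n k r : nat) (C : seq {set 'I_n}) :=
  promoD k (take r C) ++ drop r C.

(* evacuation: partial_2 o ... o partial_{h-1} o partial_h *)
Definition evac (n k : nat) (C : seq {set 'I_n}) :=
  foldr (fun r acc => rpromo k r acc) C (iota 2 (size C).-1).

From mathcomp Require Import all_boot zify.
Set Implicit Arguments. Unset Strict Implicit. Unset Printing Implicit Defensive.

(* Evacuation is a composition of r-promotions, and an r-promotion replaces a
   prefix of C by its promotion, a rearrangement of the same facets.  Such a
   replacement keeps a shelling order shelling as long as the new prefix is
   itself shelling, because shelling witnesses lying in the prefix can be
   relocated inside it.  So everything reduces to: promotion preserves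
   shelling orders.  Promotion moves each track vertex v_j to just before
   v_(j+1), past the non-neighbours v_j + 1, ..., v_(j+1) - 1, and shifts every
   other facet down by one.  A track vertex j gains in its past
   the facets i strictly between j and its next neighbour; following shelling
   witnesses backwards from i, C_i :&: C_j is covered by a neighbour of j
   placed before that next neighbour.  Neither the size k of the facets nor
   their distinctness plays any role. *)

Lemma ohead_filter_iota_le (P : pred nat) a l m : a <= m < a + l -> P m ->
  exists2 w, ohead [seq j <- iota a l | P j] = Some w & w <= m.
Proof.
elim: l a => [|l IH] a hm Pm /=; first lia.
case: ifP => Pa; first by exists a => //; lia.
have ma : m != a by apply: contraFneq Pa => <-.
apply: IH => //; lia.
Qed.

Section Track.
Variables (G : rel nat) (h : nat).
Local Notation tsucc v := (odflt h.+1 (tnext G h v)).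

Lemma tnext_bounds v w : tnext G h v = Some w -> v < w <= h.
Proof.
move=> E; have : w \in [seq j <- iota v.+1 (h - v) | G v j].
  by move: E; rewrite /tnext; case: [seq _ <- _ | _] => //= x s [->]; exact: mem_head.
by rewrite mem_filter mem_iota => /andP [_]; lia.
Qed.

Lemma tsucc_bounds v : v <= h -> v < tsucc v <= h.+1.
Proof. by case E: (tnext G h v) => [w|] /=; [have := tnext_bounds E | ]; lia. Qed.

Lemma tsucc_nonadj v m : v < m < tsucc v -> ~~ G v m.
Proof.
move=> hm; apply/negP => Gvm.
have hmh : m <= h.
  by case E: (tnext G h v) hm => [w|] /=; [have := tnext_bounds E | ]; lia.
have [w E wm] := @ohead_filter_iota_le (G v) v.+1 (h - v) m ltac:(lia) Gvm.
by move: hm; rewrite /tnext E /=; lia.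
Qed.

Lemma trk_ge f u x : x \in trk G h f u -> u <= x.
Proof.
elim: f u => [|f IH] u /=; rewrite inE; first by move/eqP->.
case/orP => [/eqP-> //|]; case E: (tnext G h u) => [w|] // /IH.
by have := tnext_bounds E; lia.
Qed.

(* [h <= f + u]: the fuel [f] cannot run out before the track passes [h]. *)
Lemma trk_closed f u x : h <= f + u -> x \in trk G h f u -> tsucc x <= h ->
  tsucc x \in trk G h f u.
Proof.
elim: f u => [|f IH] u hf /=.
  rewrite inE => /eqP->.
  by case E: (tnext G h u) => [w|] /=; [have := tnext_bounds E | ]; lia.
case E: (tnext G h u) => [w|]; rewrite inE; last by move=> /eqP->; rewrite E /=; lia.
case/orP => [/eqP-> | hx] hs; rewrite inE; apply/orP; right.
  by rewrite E; case: f {IH hf} => [|f]; exact: mem_head.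
by have := tnext_bounds E => hw; apply: IH => //; lia.
Qed.

Lemma trk_tsucc_le f u a b : a \in trk G h f u -> b \in trk G h f u -> a < b ->
  tsucc a <= b.
Proof.
elim: f u => [|f IH] u /=; rewrite !inE; first by move=> /eqP-> /eqP->; rewrite ltnn.
case E: (tnext G h u) => [w|]; last by rewrite !orbF => /eqP-> /eqP->; rewrite ltnn.
have hw := tnext_bounds E.
case/orP => [/eqP-> | ha]; case/orP => [/eqP-> | hb] hab.
- by rewrite ltnn in hab.
- by rewrite E; exact: trk_ge hb.
- by have := trk_ge ha; lia.
- exact: IH ha hb hab.
Qed.

Lemma mem_track1 : 1 \in track G h.
Proof. by rewrite /track; case: {2}h => [|f]; exact: mem_head. Qed.

Lemma track_closed v : v \in track G h -> tsucc v <= h -> tsucc v \in track G h.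
Proof. by apply: trk_closed; lia. Qed.

Lemma track_tsucc_le a b : a \in track G h -> b \in track G h -> a < b -> tsucc a <= b.
Proof. exact: trk_tsucc_le. Qed.

Lemma track_straddle j : 1 <= j <= h -> j \notin track G h ->
  exists2 v, v \in track G h & v < j < tsucc v.
Proof.
have skip v m : v \in track G h -> m <= h -> m \notin track G h -> tsucc v != m.
  by move=> tv mh; apply: contraNneq => e; rewrite -e; apply: track_closed; rewrite ?e.
elim: j => [|j IH] hj tj //.
have tsj := @tsucc_bounds j ltac:(lia).
case: (boolP (j \in track G h)) => tj'.
  by exists j => //; have := skip j j.+1 tj' ltac:(lia) tj; lia.
have j1 : 0 < j by case: j {IH hj tsj} tj tj' => //; rewrite mem_track1.
have [v tv hv] := IH ltac:(lia) tj'.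
by exists v => //; have := skip v j.+1 tv ltac:(lia) tj; lia.
Qed.

Lemma promoE v : promo G h v = if v \in track G h then (tsucc v).-1 else v.-1.
Proof. by rewrite /promo; case: ifP => //; case: tnext. Qed.

Lemma promo_bounds i : 1 <= i <= h -> 1 <= promo G h i <= h.
Proof.
move=> hi; rewrite promoE; case: ifP => ti; first by have := @tsucc_bounds i; lia.
have : i != 1 by apply: contraFneq ti => ->; exact: mem_track1.
lia.
Qed.

Lemma promo_inj i j : 1 <= i <= h -> 1 <= j <= h -> promo G h i = promo G h j -> i = j.
Proof.
wlog ij : i j / i <= j.
  by move=> W hi hj e; case: (leqP i j) => ij; [|apply/esym]; apply: W => //; lia.
move=> hi hj; case: (eqVneq i j) => // ne; rewrite !promoE.
have := @tsucc_bounds i ltac:(lia); have := @tsucc_bounds j ltac:(lia).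
case: ifP => ti; case: ifP => tj si sj e; try lia.
- by have := track_tsucc_le ti tj ltac:(lia); lia.
- have si_j : tsucc i = j by lia.
  by have := track_closed ti ltac:(lia); rewrite si_j tj.
Qed.

Lemma promo_lt_track j m : j \in track G h -> j <= h -> 1 <= m <= h ->
  (promo G h m < promo G h j) = (m != j) && (m < tsucc j).
Proof.
move=> tj jh hm; rewrite !promoE tj.
have := @tsucc_bounds j jh; have := @tsucc_bounds m ltac:(lia).
case: (ltngtP m j) => [mj|jm|->]; last by rewrite tj ltnn.
- by case: ifP => tm; [have := track_tsucc_le tm tj mj | ]; lia.
- by case: ifP => tm; [have := track_tsucc_le tj tm jm | ]; lia.
Qed.

Lemma promo_lt_offtrack j v m : j \notin track G h -> v \in track G h ->
  v < j < tsucc v -> 1 <= m <= h ->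
  (promo G h m < promo G h j) = (m < j) && (m != v).
Proof.
move=> tj tv hv hm; rewrite !promoE (negbTE tj).
case: ifP => tm; last first.
  have : m != v by apply: contraFneq tm => ->.
  lia.
have := @tsucc_bounds m ltac:(lia).
case: (ltngtP m v) => [mv|vm|->]; last by lia.
- by have := track_tsucc_le tm tv mv; lia.
- by have := track_tsucc_le tv tm vm; lia.
Qed.

End Track.

(* The shelling condition for the reordering of [C] that puts facet [i] at
   position [s i]. *)
Definition shelling_along n k (C : seq {set 'I_n}) (s : nat -> nat) : Prop :=
  forall i j, 1 <= i <= size C -> 1 <= j <= size C -> s i < s j ->
    exists z, [/\ 1 <= z <= size C, s z < s j, #|Cn C z :&: Cn C j| = k - 1
              & Cn C i :&: Cn C j \subset Cn C z :&: Cn C j].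

Section Positions.
Variable n : nat.
Implicit Types A B C : seq {set 'I_n}.

Lemma Cn_mem C i : 1 <= i <= size C -> Cn C i \in C.
Proof. by case/andP => /prednK hi ile; apply: mem_nth; rewrite hi. Qed.

Lemma mem_Cn C x : x \in C -> exists2 i, 1 <= i <= size C & Cn C i = x.
Proof.
case/(nthP set0) => i hi <-.
(* restate [hi] at the type of [C], so that [lia] sees a single [size C] *)
have {}hi : i < size C := hi.
by exists i.+1; [lia | ].
Qed.

Lemma Cn_catl A B p : 1 <= p <= size A -> Cn (A ++ B) p = Cn A p.
Proof. by move=> hp; rewrite /Cn nth_cat ifT //; lia. Qed.

Lemma Cn_catr A B p : size A < p -> Cn (A ++ B) p = Cn B (p - size A).
Proof. by move=> hp; rewrite /Cn nth_cat ifF; [congr nth | ]; lia. Qed.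

Lemma Cn_take C r i : 1 <= i <= r -> Cn (take r C) i = Cn C i.
Proof. by move=> hi; rewrite /Cn nth_take //; lia. Qed.

Lemma size_act (s : nat -> nat) C : size (act s C) = size C.
Proof. by rewrite size_map size_iota. Qed.

End Positions.

Section Relabelling.
Variables (n : nat) (C : seq {set 'I_n}) (s : nat -> nat).
Local Notation h := (size C).
Hypothesis s_bounds : forall i, 1 <= i <= h -> 1 <= s i <= h.
Hypothesis s_inj : forall i j, 1 <= i <= h -> 1 <= j <= h -> s i = s j -> i = j.

Lemma uniq_relabel : uniq [seq s i | i <- iota 1 h].
Proof.
rewrite map_inj_in_uniq ?iota_uniq // => i j.
by rewrite !mem_iota => hi hj; apply: s_inj; lia.
Qed.

Lemma mem_relabel : [seq s i | i <- iota 1 h] =i iota 1 h.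
Proof.
have sub : {subset [seq s i | i <- iota 1 h] <= iota 1 h}.
  by move=> x /mapP [i]; rewrite !mem_iota => hi ->; have := s_bounds (i := i); lia.
have le : size (iota 1 h) <= size [seq s i | i <- iota 1 h] by rewrite size_map.
by have [] := uniq_min_size uniq_relabel sub le.
Qed.

Lemma relabel_surj p : 1 <= p <= h -> exists2 i, 1 <= i <= h & s i = p.
Proof.
move=> hp; have : p \in [seq s i | i <- iota 1 h] by rewrite mem_relabel mem_iota; lia.
by case/mapP => i; rewrite mem_iota => hi ->; exists i => //; lia.
Qed.

Lemma Cn_act i : 1 <= i <= h -> Cn (act s C) (s i) = Cn C i.
Proof.
move=> hi; have := s_bounds hi => hs.
rewrite /Cn /act (nth_map 0) ?size_iota; last by lia.
have -> : nth 0 (iota 1 h) (s i).-1 = s i by rewrite nth_iota; lia.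
have -> : s i = nth 0 [seq s i | i <- iota 1 h] i.-1.
  by rewrite (nth_map 0) ?size_iota ?nth_iota; [congr s | | ]; lia.
by rewrite index_uniq ?uniq_relabel // size_map size_iota; lia.
Qed.

Lemma mem_act : act s C =i C.
Proof.
move=> x; apply/idP/idP.
  case/mapP => m; rewrite -mem_relabel => mL ->; apply: mem_nth.
  by move: mL; rewrite -index_mem size_map size_iota.
case/mem_Cn => i hi <-; rewrite -(Cn_act hi); apply: Cn_mem.
by rewrite size_act; exact: s_bounds.
Qed.

Lemma shelling_act k : shelling_along k C s -> shelling k (act s C).
Proof.
move=> shs p q hp pq; rewrite size_act => hq.
have [i hi ei] := @relabel_surj p ltac:(lia).
have [j hj ej] := @relabel_surj q ltac:(lia).
subst p q.
have [z [hz zj hzj sub]] := shs i j hi hj pq.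
by exists (s z); rewrite !Cn_act //; split => //; have := s_bounds hz; lia.
Qed.

End Relabelling.

Lemma shelling_take n k (C : seq {set 'I_n}) r : shelling k C -> shelling k (take r C).
Proof.
move=> shC i j hi ij; rewrite size_take_min => hj.
have [z [hz zj hzj sub]] := shC i j hi ij ltac:(lia).
by exists z; rewrite !Cn_take //; lia.
Qed.

Lemma Cn_cat_relocate n (A A' B : seq {set 'I_n}) p j :
  A =i A' -> size A = size A' -> 1 <= p < j -> size A < j ->
  exists2 p', 1 <= p' < j & Cn (A' ++ B) p' = Cn (A ++ B) p.
Proof.
move=> eA sA hp hA; case: (leqP p (size A)) => pA.
  rewrite [Cn (A ++ B) p]Cn_catl; last lia.
  have [p' hp' <-] : exists2 p', 1 <= p' <= size A' & Cn A' p' = Cn A p.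
    by apply: mem_Cn; rewrite -eA Cn_mem //; lia.
  by exists p'; [lia | rewrite Cn_catl].
by exists p; [lia | rewrite !Cn_catr -?sA].
Qed.

Lemma shelling_cat_prefix n k (A A' B : seq {set 'I_n}) :
  A =i A' -> size A = size A' -> shelling k A' -> shelling k (A ++ B) ->
  shelling k (A' ++ B).
Proof.
move=> eA sA shA' shAB i j hi ij; rewrite size_cat -sA => hj.
case: (leqP j (size A)) => jA.
  have [z [hz zj hzj sub]] := shA' i j hi ij ltac:(lia).
  by exists z; rewrite !Cn_catl //; lia.
have ej : Cn (A' ++ B) j = Cn (A ++ B) j by rewrite !Cn_catr -?sA.
have [i0 hi0 ei] := @Cn_cat_relocate n A' A B i j (fun x => esym (eA x))
  (esym sA) ltac:(lia) ltac:(lia).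
have hjAB : j <= size (A ++ B) by rewrite size_cat; lia.
have [z [hz zj hzj sub]] := shAB i0 j ltac:(lia) ltac:(lia) hjAB.
have [z' hz' ez] := @Cn_cat_relocate n A A' B z j eA sA ltac:(lia) jA.
by exists z'; rewrite ej ez -ei; split => //; lia.
Qed.

Section Promotion.
Variables (n k : nat) (C : seq {set 'I_n}).
Hypothesis shC : shelling k C.
Local Notation h := (size C).
Local Notation G := (dual k C).
Local Notation tsucc v := (odflt h.+1 (tnext G h v)).

Lemma shelling_reverse_witness j B : 1 <= j -> B <= h.+1 ->
  (forall m, j < m < B -> ~~ G j m) ->
  forall i, j < i < B -> exists z, [/\ 1 <= z < B, z != j,
    #|Cn C z :&: Cn C j| = k - 1 & Cn C j :&: Cn C i \subset Cn C z].
Proof.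
move=> j1 hB nadj i; elim/ltn_ind: i => i IH hi.
have [z0 [z01 z0i hz0 sz0]] := @shC j i j1 ltac:(lia) ltac:(lia).
have sz0j : Cn C j :&: Cn C i \subset Cn C z0 :&: Cn C j.
  by rewrite subsetI subsetIl andbT (subset_trans sz0) ?subsetIl.
case: (ltngtP z0 j) => z0j.
- have [z [z1 zj hz sz]] := @shC z0 j z01 z0j ltac:(lia).
  exists z; split => //; try lia.
  exact: subset_trans sz0j (subset_trans sz (subsetIl _ _)).
- have [z [z1 zj hz sz]] := IH z0 z0i ltac:(lia).
  by exists z; split => //; rewrite (subset_trans sz0j) // setIC.
- by move: (nadj i hi); rewrite /dual -z0j hz0 eqxx.
Qed.

Lemma promo_shelling_along : shelling_along k C (promo G h).
Proof.
move=> i j hi hj.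
case: (boolP (j \in track G h)) => tj.
  rewrite promo_lt_track //; last lia.
  have := @tsucc_bounds G h j ltac:(lia).
  case: (ltngtP i j) => [ij|ji|->] //= sj isj.
    have [z [z1 zj hz sz]] := @shC i j ltac:(lia) ij ltac:(lia).
    by exists z; rewrite promo_lt_track //; try split => //; lia.
  have [z [z1 zj hz sz]] := @shelling_reverse_witness j (tsucc j)
    ltac:(lia) ltac:(lia) (fun m => @tsucc_nonadj G h j m) i ltac:(lia).
  exists z; rewrite promo_lt_track //; try split => //; try lia.
  by rewrite subsetI subsetIr setIC sz.
have [v tv hv] := track_straddle hj tj.
rewrite (promo_lt_offtrack tj tv hv) // => /andP [ij iv].
have [z [z1 zj hz sz]] := @shC i j ltac:(lia) ij ltac:(lia).
have zv : z != v.
  apply/eqP => ezv; move: (@tsucc_nonadj G h v j hv).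
  by rewrite /dual -ezv hz eqxx.
by exists z; rewrite (promo_lt_offtrack tj tv hv) //; try split => //; lia.
Qed.

Lemma promoD_shelling : shelling k (promoD k C).
Proof.
apply: shelling_act promo_shelling_along; [exact: promo_bounds | exact: promo_inj].
Qed.

End Promotion.

Lemma mem_promoD n k (C : seq {set 'I_n}) : promoD k C =i C.
Proof. apply: mem_act; [exact: promo_bounds | exact: promo_inj]. Qed.

Lemma shelling_rpromo n k (C : seq {set 'I_n}) r :
  shelling k C -> shelling k (rpromo k r C).
Proof.
move=> shC; rewrite /rpromo; apply: (@shelling_cat_prefix _ _ (take r C)).
- by move=> x; rewrite mem_promoD.
- by rewrite size_act.
- exact/promoD_shelling/shelling_take.
- by rewrite cat_take_drop.
Qed.

Lemma shelling_evac n k (C : seq {set 'I_n}) : shelling k C -> shelling k (evac k C).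
Proof.
by move=> shC; rewrite /evac; elim: (iota _ _) => //= r rs IH; exact: shelling_rpromo IH.
Qed.

Theorem theorem5p11 (k n : nat) (C : seq {set 'I_n}) :
  0 < k -> k <= n -> is_conf k C -> shelling k C ->
  shelling k (evac k C).
Proof. by move=> _ _ _; exact: shelling_evac. Qed.
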